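(* Let $S\subset\mathbb{R}^q$ be compact, let $s\in S$, let $c_1,\dots,c_M\in S$, and let $(\xi_k)_{k\in\mathbb{N}}\subset\mathbb{R}^q$ be bounded. Suppose $\ell(x,\xi)=\rho(\|x-\xi\|)$ where $\rho:[0,\infty)\to(0,1)$ is continuous and injective. Then for every $\delta>0$ there exists $\epsilon\in(0,1)$ such that for all $k\in\mathbb{N}$ and all $i\in\{1,\dots,M\}$, $$\big|\,\|\xi_k-s\|-\|\xi_k-c_i\|\,\big|\ge\delta\implies|\ell(s,\xi_k)-\ell(c_i,\xi_k)|\ge\epsilon.$$ *)

From HB Require Import structures.
From mathcomp Require Import all_boot all_order all_algebra.
From mathcomp Require Import all_classical all_reals all_analysis.
Set Implicit Arguments. Unset Strict Implicit. Unset Printing Implicit Defensive.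
Import Order.TTheory GRing.Theory Num.Theory.
Local Open Scope ring_scope.

Definition enorm (R : realType) (q : nat) (v : 'rV[R]_q) : R :=
  Num.sqrt (\sum_(j < q) (v ord0 j) ^+ 2).

From HB Require Import structures.
From mathcomp Require Import all_boot all_order all_algebra.
From mathcomp Require Import all_classical all_reals all_analysis.
From mathcomp Require Import lra.
Import Order.TTheory GRing.Theory Num.Theory numFieldNormedType.Exports.
Local Open Scope classical_set_scope.
Local Open Scope ring_scope.

(* A continuous injective [rho] on [[0, +oo[] is strictly monotone.  Cut
   [[0, L]] into finitely many cells of length [delta / 2]: two points at
   distance at least [delta] enclose a whole cell, so [|rho a - rho b|] is at
   least the smallest of the finitely many positive increments of [rho] across
   a cell.  All distances [|xi k - s|], [|xi k - c i|] lie in one such bounded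
   [[0, L]], since [xi] is bounded and there are finitely many centres. *)

Section GapLowerBound.
Context {R : archiRealFieldType}.

Lemma incr_gap_lbound (f : R -> R) (delta L : R) :
  {in `[0, +oo[%R &, {homo f : x y / x < y}} -> 0 < delta ->
  exists2 eps, 0 < eps &
    forall a b, 0 <= b <= L -> b + delta <= a -> eps <= f a - f b.
Proof.
move=> f_incr delta_gt0; pose h := delta / 2.
have h_gt0 : 0 < h by rewrite divr_gt0.
have ge0_itv x : 0 <= x -> x \in `[0, +oo[%R by rewrite in_itv /= => ->.
have cell_itv j : j%:R * h \in `[0, +oo[%R.
  by rewrite ge0_itv // (mulr_ge0 (ler0n _ _) (ltW h_gt0)).
pose g j := f (j.+2%:R * h) - f (j.+1%:R * h).
have g_gt0 j : 0 < g j.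
  by rewrite subr_gt0; apply: f_incr; rewrite ?cell_itv // ltr_pM2r // ltr_nat.
pose N := Num.truncn (L / h).
exists (\big[Num.min/g 0%N]_(j < N.+1) g j).
  by apply/bigmin_gtP; split=> // j _.
move=> a b /andP[b_ge0 bL] ba; pose j := Num.truncn (b / h).
have /andP[jh_le_b b_lt_j1h] := truncn_itv (divr_ge0 b_ge0 (ltW h_gt0)).
rewrite ler_pdivlMr // in jh_le_b; rewrite ltr_pdivrMr // in b_lt_j1h.
have jN : (j < N.+1)%N by rewrite ltnS; apply: le_truncn; rewrite ler_pM2r ?invr_gt0.
have a_ge0 : 0 <= a by apply: le_trans (addr_ge0 b_ge0 (ltW delta_gt0)) ba.
have f_le := ltW_homo_in f_incr.
apply: (le_trans (bigmin_le _ (Ordinal jN) _)); rewrite /g lerB //=.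
  apply: f_le; rewrite ?cell_itv ?ge0_itv //; apply: (le_trans _ ba).
  by rewrite -addn2 natrD mulrDl (_ : 2%:R * h = delta) ?lerD2r // mulrC divfK.
by apply: f_le; [exact: ge0_itv | exact: cell_itv | exact: ltW].
Qed.

Lemma strict_monotonic_gap_lbound (f : R -> R) (delta L : R) :
  {in `[0, +oo[%R &, {homo f : x y / x < y}} \/
  {in `[0, +oo[%R &, {homo f : x y /~ x < y}} -> 0 < delta ->
  exists2 eps, 0 < eps & forall a b, 0 <= a <= L -> 0 <= b <= L ->
    delta <= `|a - b| -> eps <= `|f a - f b|.
Proof.
move=> f_mono delta_gt0.
have [g g_incr gf] : exists2 g : R -> R, {in `[0, +oo[%R &, {homo g : x y / x < y}}
    & forall a b, `|g a - g b| = `|f a - f b|.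
  case: f_mono => [f_incr|f_decr]; first by exists f.
  exists (fun x => - f x) => [x y xI yI xy|a b]; first by rewrite ltrN2 f_decr.
  by rewrite -opprD normrN.
have [eps eps_gt0 Heps] := incr_gap_lbound _ _ L g_incr delta_gt0.
exists eps => // a b aL bL; rewrite -gf ler_normr => /orP[] gap.
  by rewrite (le_trans _ (ler_norm _)) // Heps //; lra.
by rewrite distrC (le_trans _ (ler_norm _)) // Heps //; lra.
Qed.

End GapLowerBound.

Section EuclideanNorm.
Context {R : realType} {q : nat}.
Implicit Types x y : 'rV[R]_q.

Lemma enorm_ge0 x : 0 <= enorm x.
Proof. exact: sqrtr_ge0. Qed.

Lemma enorm_sqr x : enorm x ^+ 2 = \sum_(j < q) (x ord0 j) ^+ 2.
Proof. by rewrite sqr_sqrtr // sumr_ge0 // => j _; rewrite sqr_ge0. Qed.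

Lemma enorm_distC x y : enorm (x - y) = enorm (y - x).
Proof.
rewrite /enorm; congr Num.sqrt; apply: eq_bigr => j _.
by rewrite !mxE -opprB sqrrN.
Qed.

Lemma enormB_le x y : enorm (x - y) <= 2 * (enorm x + enorm y).
Proof.
have x_ge0 := enorm_ge0 x; have y_ge0 := enorm_ge0 y.
rewrite -ler_sqr ?nnegrE ?enorm_ge0 ?mulr_ge0 ?addr_ge0 //.
have sum_le : enorm (x - y) ^+ 2 <= 2 * (enorm x ^+ 2 + enorm y ^+ 2).
  rewrite !enorm_sqr mulrDr !mulr_sumr -big_split /=.
  apply: ler_sum => j _; rewrite !mxE.
  by have := sqr_ge0 (x ord0 j + y ord0 j); lra.
by apply: le_trans sum_le _; nra.
Qed.

End EuclideanNorm.

Theorem lemma1 (R : realType) (q : nat) (S : set 'rV[R]_q) (s : 'rV[R]_q)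
  (M : nat) (c : 'I_M -> 'rV[R]_q) (xi : nat -> 'rV[R]_q)
  (rho : R -> R) (ell : 'rV[R]_q -> 'rV[R]_q -> R) :
  compact S -> S s -> (forall i, S (c i)) ->
  (exists B : R, forall k, enorm (xi k) <= B) ->
  {within `[0, +oo[, continuous rho} ->
  (forall x : R, 0 <= x -> 0 < rho x < 1) ->
  {in `[0, +oo[%R &, injective rho} ->
  (forall x y, ell x y = rho (enorm (x - y))) ->
  forall delta : R, 0 < delta ->
  exists eps : R, 0 < eps < 1 /\
    forall (k : nat) (i : 'I_M),
      delta <= `| enorm (xi k - s) - enorm (xi k - c i) | ->
      eps <= `| ell s (xi k) - ell (c i) (xi k) |.
Proof.
move=> _ _ _ [B xiB] rho_cont _ rho_inj ellE delta delta_gt0.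
pose C := \big[Num.max/enorm s]_(i < M) enorm (c i).
have dist_le k p : enorm p <= C -> 0 <= enorm (xi k - p) <= 2 * (B + C).
  move=> pC; rewrite enorm_ge0 (le_trans (enormB_le _ _)) //.
  by rewrite ler_pM2l // lerD.
have [e e_gt0 He] := strict_monotonic_gap_lbound _ _ (2 * (B + C))
  (itv_continuous_inj_mono rho_cont rho_inj) delta_gt0.
exists (Num.min e 2^-1); split.
  by rewrite lt_min gt_min e_gt0 /=; apply/andP; split; [|apply/orP; right]; lra.
move=> k i gap; rewrite !ellE enorm_distC (enorm_distC (c i)) ge_min He //.
- by rewrite dist_le // bigmax_ge_id.
- by rewrite dist_le // le_bigmax.
Qed.
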